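(* Fix $D\ge 1$, $\lambda>0$, and vectors $\mathbf{v}_1,\dots,\mathbf{v}_D\in\mathbb{R}^D$ such that, with $\mathbf{v}_{D+1}:=\mathbf{0}$, $\|\mathbf{v}_d-\mathbf{v}_{d'}\|_2=\lambda$ for all $d\neq d'$ in $\{1,\dots,D+1\}$. For a current state $\boldsymbol{\theta}\in\mathbb{R}^D$, let the multiproposal $q(\boldsymbol{\theta},\cdot)$ be the distribution of the configuration $$(\boldsymbol{\theta}^*_1,\dots,\boldsymbol{\theta}^*_{D+1}) := \mathbf{Q}(\mathbf{v}_1,\dots,\mathbf{v}_D,\mathbf{0})+\boldsymbol{\theta},\qquad \mathbf{Q}\sim\mathcal{H}(\mathcal{O}_D),$$ where $\mathcal{H}(\mathcal{O}_D)$ is the uniform (Haar) probability distribution on the orthogonal group $\mathcal{O}_D$ and adding $\boldsymbol{\theta}$ means adding it to each column (so $\boldsymbol{\theta}^*_{D+1}=\boldsymbol{\theta}$). Then for any configuration $\boldsymbol{\Theta}^*=(\boldsymbol{\theta}^*_1,\dots,\boldsymbol{\theta}^*_{D+1})$ so generated, the multiproposal satisfies the symmetry relation $$q(\boldsymbol{\theta}^*_1,\boldsymbol{\Theta}^* )=\dots=q(\boldsymbol{\theta}^*_d,\boldsymbol{\Theta}^* )=\dots=q(\boldsymbol{\theta}^*_{D+1},\boldsymbol{\Theta}^* ),$$ i.e. the configuration (as a set of $D+1$ points) is equally likely to be generated starting from any one of its points as the current state.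
   Context: $q(\boldsymbol{\theta},\boldsymbol{\Theta}^* )$ denotes the probability (density) that the proposal mechanism, started at current state $\boldsymbol{\theta}$, produces the set of proposals $\boldsymbol{\Theta}^*$, which always contains $\boldsymbol{\theta}$ itself. *)

From HB Require Import structures.
From mathcomp Require Import all_boot all_order all_algebra all_fingroup.
From mathcomp Require Import all_classical all_reals all_analysis.
From mathcomp Require Import measurable_realfun.
Set Implicit Arguments. Unset Strict Implicit. Unset Printing Implicit Defensive.
Import Order.TTheory GRing.Theory Num.Theory.
Local Open Scope ring_scope.

Definition enorm (R : realType) (D : nat) (x : 'cV[R]_D) : R :=
  Num.sqrt (\sum_(i < D) (x i 0) ^+ 2).

Definition is_orth_mx (R : realType) (D : nat) (Q : 'M[R]_D) : Prop :=
  Q^T *m Q = 1%:M.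

(* Encodings into tuples (which carry the product Borel sigma-algebra). *)
Definition tup_of_cv (R : realType) (D : nat) (x : 'cV[R]_D) : D.-tuple R :=
  [tuple x i 0 | i < D].
Definition cv_of_tup (R : realType) (D : nat) (t : D.-tuple R) : 'cV[R]_D :=
  \col_i tnth t i.
Definition tup_of_mx (R : realType) (D : nat) (Q : 'M[R]_D) : D.-tuple (D.-tuple R) :=
  [tuple [tuple Q i j | j < D] | i < D].

Definition perm_tup (T : Type) (n : nat) (s : 'S_n) (t : n.-tuple T) : n.-tuple T :=
  [tuple tnth t (s i) | i < n].

(* The multiproposal configuration Q (v_1, ..., v_D, v_{D+1}) + theta,
   each column shifted by theta; the i-th entry is theta^*_{i+1}. *)
Definition config (R : realType) (D : nat) (v : 'I_D.+1 -> 'cV[R]_D)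
    (theta : D.-tuple R) (Q : 'M[R]_D) : D.+1.-tuple (D.-tuple R) :=
  [tuple tup_of_cv (Q *m v i + cv_of_tup theta) | i < D.+1].

(* Integral with respect to Lebesgue measure on R^n, as the iterated
   integral of the one-dimensional Lebesgue measure (for nonnegative
   measurable integrands this is the product Lebesgue integral, by Tonelli). *)
Fixpoint leb_int (R : realType) (n : nat) : (n.-tuple R -> \bar R) -> \bar R :=
  match n return (n.-tuple R -> \bar R) -> \bar R with
  | 0 => fun f => f [tuple]
  | m.+1 => fun f =>
      (\int[@lebesgue_measure R]_x leb_int (fun t : m.-tuple R => f (cons_tuple x t)))%E
  end.

From HB Require Import structures.
From mathcomp Require Import all_boot all_order all_algebra all_fingroup.
From mathcomp Require Import all_classical all_reals all_analysis.
From mathcomp Require Import measurable_realfun.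
From mathcomp Require Import ring lra.
Import Order.TTheory GRing.Theory Num.Theory.
Local Open Scope ring_scope.
Local Open Scope classical_set_scope.

(* Integrate out theta first (Tonelli), so that Q is averaged last. Let H be the
   Householder reflection in the hyperplane orthogonal to v_d. It maps v_d to
   -v_d = v_(D+1) - v_d and v_(D+1) = 0 to v_d - v_d, and, because the v_i are the
   vertices of a regular simplex, every other v_j to v_j - v_d. Hence Q H generates
   from theta + Q v_d the same configuration as Q generates from theta, with the d-th
   and last points swapped, and theta + Q v_d is exactly theta^*_d. Haar measure is
   also right invariant, f is symmetric in the configuration and Lebesgue measure is
   translation invariant, so averaging f at theta or at theta^*_d gives the same value. *)

Section lebesgue_translation.
Context {R : realType}.

(* Typed on [measurableTypeR R], the type of [lebesgue_measure_unique]. *)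
Definition shiftR (a : R) : measurableTypeR R -> measurableTypeR R := shift a.

Lemma measurable_shiftR (a : R) : measurable_fun [set: measurableTypeR R] (shiftR a).
Proof. by apply: measurable_funD => //; exact: measurable_cst. Qed.

HB.instance Definition _ (a : R) :=
  isMeasurableFun.Build _ _ _ _ (shiftR a) (measurable_shiftR a).

Lemma pushforward_lebesgue_shift (a : R) (A : set R) : measurable A ->
  pushforward lebesgue_measure (shiftR a) A = lebesgue_measure A.
Proof.
move=> mA; apply/esym; apply: lebesgue_measure_unique => // X [[x y] _ <-].
rewrite /= /pushforward /=.
have -> : shiftR a @^-1` `]x, y] = `]x - a, y - a]%classic.
  by apply/seteqP; split => z /=; rewrite !in_itv /= /shiftR /shift ltrBlDr lerBrDr.
rewrite !lebesgue_measure_itv /= !lte_fin ltrD2r; case: ifP => // _.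
by rewrite -!EFinD opprB addrA subrK.
Qed.

Lemma ge0_integral_lebesgue_shift (a : R) (h : R -> \bar R) :
  measurable_fun [set: R] h -> (forall x, 0 <= h x)%E ->
  (\int[@lebesgue_measure R]_x h (x + a)%R = \int[@lebesgue_measure R]_x h x)%E.
Proof.
move=> mh h0.
transitivity (\int[pushforward lebesgue_measure (shiftR a)]_x h x)%E.
  by rewrite ge0_integral_pushforward.
by apply: eq_measure_integral => A mA _; exact: pushforward_lebesgue_shift.
Qed.

End lebesgue_translation.

Section iterated_lebesgue_integral.
Context {R : realType}.

Lemma leb_int_ge0 n (F : n.-tuple R -> \bar R) :
  (forall t, 0 <= F t)%E -> (0 <= leb_int F)%E.
Proof.
elim: n F => [|n IHn] F F0 /=; first exact: F0.
by apply: integral_ge0 => x _; exact: IHn.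
Qed.

Lemma measurable_fun_cons_tuple {d} {X : measurableType d} {n}
    {F : X * n.+1.-tuple R -> \bar R} :
  measurable_fun setT F ->
  measurable_fun setT (fun z : (X * R) * n.-tuple R => F (z.1.1, cons_tuple z.1.2 z.2)).
Proof.
move=> mF; apply: measurableT_comp mF _; apply: measurable_fun_pair.
  exact: measurableT_comp measurable_fst measurable_fst.
apply: (@measurable_cons _ _ _ _ (fun z : (X * R) * n.-tuple R => z.1.2) n snd) => //.
exact: measurableT_comp measurable_snd measurable_fst.
Qed.

Lemma measurable_leb_int {d} {X : measurableType d} {n} {F : X * n.-tuple R -> \bar R} :
  measurable_fun setT F -> (forall z, 0 <= F z)%E ->
  measurable_fun setT (fun x => leb_int (fun t => F (x, t))).
Proof.
elim: n d X F => [|n IHn] d X F mF F0 /=.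
  by apply: measurableT_comp mF _; apply: measurable_fun_pair => //; exact: measurable_cst.
have mG := IHn _ _ _ (measurable_fun_cons_tuple mF) (fun z => F0 _).
apply: (measurable_fun_fubini_tonelli_F (m2 := @lebesgue_measure R) _ mG) => z.
by apply: leb_int_ge0 => t; exact: F0.
Qed.

Lemma integral_leb_int {d} {X : measurableType d}
    (m : {sigma_finite_measure set X -> \bar R}) {n} (F : X * n.-tuple R -> \bar R) :
  measurable_fun setT F -> (forall z, 0 <= F z)%E ->
  (\int[m]_x leb_int (fun t => F (x, t)) = leb_int (fun t => \int[m]_x F (x, t)))%E.
Proof.
elim: n F => [|n IHn] F mF F0 //=.
have mG := measurable_leb_int (measurable_fun_cons_tuple mF) (fun z => F0 _).
have := fubini_tonelli (m1 := m) (m2 := @lebesgue_measure R) _ mG.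
rewrite /= => -> //; last by move=> z; apply: leb_int_ge0 => t; exact: F0.
apply: eq_integral => y _; apply: (IHn (fun z => F (z.1, cons_tuple y z.2))) => [|z].
apply: measurableT_comp mF _; apply: measurable_fun_pair => //.
  exact: (@measurable_cons _ _ _ _ (fun _ : X * n.-tuple R => y) n snd).
exact: F0.
Qed.

Definition tuple_shift {n} (a t : n.-tuple R) : n.-tuple R :=
  [tuple tnth t i + tnth a i | i < n].

Lemma tuple_shift_cons n (a : n.+1.-tuple R) (y : R) (t : n.-tuple R) :
  tuple_shift a (cons_tuple y t) =
  cons_tuple (y + thead a) (tuple_shift [tuple of behead a] t).
Proof.
apply: eq_from_tnth => -[[|i] lti]; rewrite tnth_mktuple !(tnth_nth 0) //=.
  by rewrite [thead _](tnth_nth 0).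
have := tnth_mktuple (fun j : 'I_n => tnth t j + tnth [tuple of behead a] j)
  (Ordinal (lti : (i < n)%N)).
by rewrite !(tnth_nth 0) /= => ->; rewrite nth_behead.
Qed.

Lemma leb_int_shift {n} (a : n.-tuple R) (G : n.-tuple R -> \bar R) :
  measurable_fun setT G -> (forall t, 0 <= G t)%E ->
  leb_int (fun t => G (tuple_shift a t)) = leb_int G.
Proof.
elim: n a G => [|n IHn] a G mG G0 /=; first by congr G; exact: tuple0.
transitivity (\int[@lebesgue_measure R]_y
                leb_int (fun t => G (cons_tuple (y + thead a)%R t)))%E.
  apply: eq_integral => y _; under eq_fun => t do rewrite tuple_shift_cons.
  apply: (IHn _ (fun t => G (cons_tuple (y + thead a)%R t))) => [|t]; last exact: G0.
  apply: measurableT_comp mG _.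
  exact: (@measurable_cons _ _ _ _ (fun=> (y + thead a)%R) n id).
apply: (ge0_integral_lebesgue_shift _ (fun y => leb_int (fun t => G (cons_tuple y t)))).
  apply: (@measurable_leb_int _ _ _ (fun z : R * n.-tuple R => G (cons_tuple z.1 z.2))).
    apply: measurableT_comp mG _.
    apply: (@measurable_cons _ _ _ _ (fun z : R * n.-tuple R => z.1) n snd) => //.
    exact: measurable_fst.
  by move=> z; exact: G0.
by move=> y; apply: leb_int_ge0 => t; exact: G0.
Qed.

End iterated_lebesgue_integral.

Definition mx_of_tup {R : realType} {n} (t : n.-tuple (n.-tuple R)) : 'M[R]_n :=
  \matrix_(i, j) tnth (tnth t i) j.

Lemma tup_of_mxK (R : realType) n : cancel (@tup_of_mx R n) mx_of_tup.
Proof. by move=> M; apply/matrixP => i j; rewrite mxE !tnth_mktuple. Qed.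

Section measurable_matrix.
Context {R : realType} {d : measure_display} {X : measurableType d}.

Definition measurable_mx {m n} (M : X -> 'M[R]_(m, n)) :=
  forall i j, measurable_fun setT (fun x => M x i j).

Lemma measurable_mx_cst {m n} (A : 'M[R]_(m, n)) : measurable_mx (fun=> A).
Proof. by move=> i j; exact: measurable_cst. Qed.

Lemma measurable_mx_add {m n} {A B : X -> 'M[R]_(m, n)} :
  measurable_mx A -> measurable_mx B -> measurable_mx (fun x => A x + B x).
Proof. by move=> mA mB i j; under eq_fun do rewrite mxE; exact: measurable_funD. Qed.

Lemma measurable_mx_mul {m n p} {A : X -> 'M[R]_(m, n)} {B : X -> 'M[R]_(n, p)} :
  measurable_mx A -> measurable_mx B -> measurable_mx (fun x => A x *m B x).
Proof.
move=> mA mB i j; under eq_fun do rewrite mxE.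
by apply: measurable_sum => k; exact: measurable_funM.
Qed.

Lemma measurable_mx_tr {m n} {A : X -> 'M[R]_(m, n)} :
  measurable_mx A -> measurable_mx (fun x => (A x)^T).
Proof. by move=> mA i j; under eq_fun do rewrite mxE; exact: mA. Qed.

Lemma measurable_mx_of_tup {n} {t : X -> n.-tuple (n.-tuple R)} :
  measurable_fun setT t -> measurable_mx (fun x => mx_of_tup (t x)).
Proof.
move=> mt i j; under eq_fun do rewrite mxE.
exact: measurableT_comp (measurable_tnth j) (measurableT_comp (measurable_tnth i) mt).
Qed.

Lemma measurable_cv_of_tup {n} {t : X -> n.-tuple R} :
  measurable_fun setT t -> measurable_mx (fun x => cv_of_tup (t x)).
Proof.
move=> mt i j; under eq_fun do rewrite mxE.
exact: measurableT_comp (measurable_tnth i) mt.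
Qed.

Lemma measurable_tup_of_mx {n} {M : X -> 'M[R]_n} :
  measurable_mx M -> measurable_fun setT (fun x => tup_of_mx (M x)).
Proof.
move=> mM; apply/measurable_fun_tnthP => i; apply/measurable_fun_tnthP => j.
by rewrite (_ : _ \o _ = fun x => M x i j) //; apply/funext => x /=; rewrite !tnth_mktuple.
Qed.

Lemma measurable_tup_of_cv {n} {u : X -> 'cV[R]_n} :
  measurable_mx u -> measurable_fun setT (fun x => tup_of_cv (u x)).
Proof.
move=> mu; apply/measurable_fun_tnthP => i.
by rewrite (_ : _ \o _ = fun x => u x i 0) //; apply/funext => x /=; rewrite tnth_mktuple.
Qed.

Lemma measurable_fun_mx_comp {n} {h : 'M[R]_n -> \bar R} {M : X -> 'M[R]_n} :
  measurable_fun setT (h \o mx_of_tup) -> measurable_mx M ->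
  measurable_fun setT (fun x => h (M x)).
Proof.
move=> mh mM.
have -> : (fun x => h (M x)) = (h \o mx_of_tup) \o (fun x => tup_of_mx (M x)).
  by apply/funext => x /=; rewrite tup_of_mxK.
exact: measurableT_comp mh (measurable_tup_of_mx mM).
Qed.

Lemma measurable_config {D} (v : 'I_D.+1 -> 'cV[R]_D) {th : X -> D.-tuple R}
    {M : X -> 'M[R]_D} :
  measurable_fun setT th -> measurable_mx M ->
  measurable_fun setT (fun x => config v (th x) (M x)).
Proof.
move=> mth mM; apply/measurable_fun_tnthP => i.
rewrite (_ : _ \o _ = fun x => tup_of_cv (M x *m v i + cv_of_tup (th x))); last first.
  by apply/funext => x /=; rewrite tnth_mktuple.
apply/measurable_tup_of_cv/measurable_mx_add; last exact: measurable_cv_of_tup.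
exact: measurable_mx_mul mM (measurable_mx_cst _).
Qed.

End measurable_matrix.

Lemma is_orth_mx_tr (R : realType) n (M : 'M[R]_n) : is_orth_mx M -> is_orth_mx M^T.
Proof. by rewrite /is_orth_mx trmxK => /mulmx1C. Qed.

Section haar_right_invariance.
Context {R : realType} {D : nat} {dO : measure_display} {Omega : measurableType dO}
  (P : probability Omega R) (Q : Omega -> 'M[R]_D).
Hypothesis mQ : measurable_mx Q.
Hypothesis Q_orth : forall w, is_orth_mx (Q w).
Hypothesis Q_haar : forall U : 'M[R]_D, is_orth_mx U ->
  forall g : D.-tuple (D.-tuple R) -> \bar R,
    measurable_fun [set: D.-tuple (D.-tuple R)] g -> (forall x, (0 <= g x)%E) ->
    (\int[P]_w g (tup_of_mx (U *m Q w)) = \int[P]_w g (tup_of_mx (Q w)))%E.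

Implicit Types h : 'M[R]_D -> \bar R.

Let integral_cst_prob (c : \bar R) : (\int[P]_w c = c)%E.
Proof.
rewrite (integral_cst P measurableT) -[RHS]mule1; congr (_ * _)%E.
exact: probability_setT.
Qed.

Let haar_mulmxl U h : is_orth_mx U ->
  measurable_fun setT (h \o mx_of_tup) -> (forall M, 0 <= h M)%E ->
  (\int[P]_w h (U *m Q w) = \int[P]_w h (Q w))%E.
Proof.
move=> oU mh h0.
transitivity (\int[P]_w (h \o mx_of_tup) (tup_of_mx (U *m Q w)))%E.
  by apply: eq_integral => w _; rewrite /= tup_of_mxK.
rewrite Q_haar // => [|t]; last exact: h0.
by apply: eq_integral => w _; rewrite /= tup_of_mxK.
Qed.

Let measurable_trmx_comp h : measurable_fun setT (h \o mx_of_tup) ->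
  measurable_fun setT ((fun M => h M^T) \o mx_of_tup).
Proof.
move=> mh; apply: (measurable_fun_mx_comp mh).
exact/measurable_mx_tr/measurable_mx_of_tup.
Qed.

(* With Q' an independent copy of Q, both sides equal the average of h (Q'^T Q). *)
Lemma haar_trmx h : measurable_fun setT (h \o mx_of_tup) -> (forall M, 0 <= h M)%E ->
  (\int[P]_w h (Q w)^T = \int[P]_w h (Q w))%E.
Proof.
move=> mh h0.
have mF : measurable_fun setT (fun z : Omega * Omega => h ((Q z.1)^T *m Q z.2)).
  apply: (measurable_fun_mx_comp mh); apply: measurable_mx_mul.
    by apply: measurable_mx_tr => i j; exact: measurableT_comp (mQ i j) measurable_fst.
  by move=> i j; exact: measurableT_comp (mQ i j) measurable_snd.
transitivity (\int[P]_w \int[P]_w' h ((Q w')^T *m Q w))%E.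
  rewrite -[LHS]integral_cst_prob; apply: eq_integral => w _.
  transitivity (\int[P]_w' (fun M => h M^T) ((Q w)^T *m Q w'))%E.
    symmetry; apply: (haar_mulmxl _ (fun M => h M^T)) => //.
      exact: is_orth_mx_tr.
    exact: measurable_trmx_comp.
  by apply: eq_integral => w' _; rewrite /= trmx_mul trmxK.
have := fubini_tonelli (m1 := P) (m2 := P) _ mF (fun z => h0 _).
rewrite /= => <-; rewrite -[RHS]integral_cst_prob.
apply: eq_integral => w _; apply: haar_mulmxl => //; exact: is_orth_mx_tr.
Qed.

Lemma haar_mulmxr W h : is_orth_mx W ->
  measurable_fun setT (h \o mx_of_tup) -> (forall M, 0 <= h M)%E ->
  (\int[P]_w h (Q w *m W) = \int[P]_w h (Q w))%E.
Proof.
move=> oW mh h0.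
have mhW : measurable_fun setT ((fun M => h (M *m W)) \o mx_of_tup).
  apply: (measurable_fun_mx_comp mh); apply: measurable_mx_mul.
    exact: measurable_mx_of_tup.
  exact: measurable_mx_cst.
transitivity (\int[P]_w (fun M => h (M *m W)) (Q w)^T)%E.
  by symmetry; apply: (haar_trmx (fun M => h (M *m W))).
transitivity (\int[P]_w (fun M => h M^T) (W^T *m Q w))%E.
  by apply: eq_integral => w _; rewrite /= trmx_mul trmxK.
transitivity (\int[P]_w (fun M => h M^T) (Q w))%E; last exact: haar_trmx.
apply: (haar_mulmxl _ (fun M => h M^T)) => //; first exact: is_orth_mx_tr.
exact: measurable_trmx_comp.
Qed.

End haar_right_invariance.

Section householder.
Context {R : realType} {n : nat}.
Implicit Types u x y : 'cV[R]_n.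

Definition vdot x y : R := (x^T *m y) 0 0.

Lemma vdotC x y : vdot x y = vdot y x.
Proof. by rewrite /vdot -[y^T *m x]trmxK trmx_mul trmxK [in RHS]mxE. Qed.

Lemma vdotBB x y : vdot (x - y) (x - y) = vdot x x - 2 * vdot x y + vdot y y.
Proof.
rewrite {1}/vdot.
have -> : (x - y)^T = x^T - y^T by apply/matrixP => i j; rewrite !mxE.
have subE (A B : 'M[R]_1) : (A - B) 0 0 = A 0 0 - B 0 0 by rewrite !mxE.
rewrite mulmxBl !mulmxBr !subE -/(vdot x x) -/(vdot x y) -/(vdot y x) -/(vdot y y).
by rewrite (vdotC y x); ring.
Qed.

Lemma enorm_sqr x : enorm x ^+ 2 = vdot x x.
Proof.
rewrite sqr_sqrtr; last by apply: sumr_ge0 => i _; exact: sqr_ge0.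
by rewrite /vdot mxE; apply: eq_bigr => i _; rewrite mxE expr2.
Qed.

Definition householder u : 'M[R]_n := 1%:M - (2 / vdot u u) *: (u *m u^T).

Lemma householder_mulmx u x :
  householder u *m x = x - (2 / vdot u u * vdot u x) *: u.
Proof.
rewrite mulmxBl mul1mx -scalemxAl -mulmxA (mx11_scalar (u^T *m x)).
by rewrite mul_mx_scalar scalerA.
Qed.

Lemma householder_self u : vdot u u != 0 -> householder u *m u = - u.
Proof.
move=> uu0; rewrite householder_mulmx mulrAC -mulrA divff // mulr1.
by rewrite scaler_nat mulr2n opprD addrA subrr add0r.
Qed.

Lemma householder_bisector u x : vdot u u != 0 -> 2 * vdot u x = vdot u u ->
  householder u *m x = x - u.
Proof.
move=> uu0 ux; rewrite householder_mulmx (_ : 2 / _ * _ = 1) ?scale1r //.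
by rewrite mulrAC ux divff.
Qed.

Lemma householder_orth u : is_orth_mx (householder u).
Proof.
have trH : (householder u)^T = householder u.
  by rewrite /householder linearB /= trmx1 linearZ /= trmx_mul trmxK.
rewrite /is_orth_mx trH; have [uu0|uu0] := eqVneq (vdot u u) 0.
  by rewrite /householder uu0 invr0 mulr0 scale0r subr0 mulmx1.
rewrite {1}/householder mulmxBr mulmx1 -scalemxAr mulmxA householder_self //.
by rewrite mulNmx scalerN /householder opprK subrK.
Qed.

End householder.

Section regular_simplex.
Context {R : realType} {D : nat} {lam : R} {v : 'I_D.+1 -> 'cV[R]_D}.
Hypotheses (lam_gt0 : 0 < lam) (v_max : v ord_max = 0).
Hypothesis v_dist : forall i j, i != j -> enorm (v i - v j) = lam.

Let vdot_dist {i j} : i != j -> vdot (v i - v j) (v i - v j) = lam ^+ 2.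
Proof. by move=> ij; rewrite -enorm_sqr v_dist. Qed.

Lemma vdot_simplex_vertex i : i != ord_max -> vdot (v i) (v i) = lam ^+ 2.
Proof. by move=> im; rewrite -(vdot_dist im) v_max subr0. Qed.

Lemma vdot_simplex_edge i j : i != ord_max -> j != ord_max -> i != j ->
  2 * vdot (v i) (v j) = lam ^+ 2.
Proof.
move=> im jm ij; have := vdot_dist ij.
rewrite vdotBB !vdot_simplex_vertex //; lra.
Qed.

Lemma householder_simplex d i :
  householder (v d) *m v i = v (tperm d ord_max i) - v d.
Proof.
have [->|dm] := eqVneq d ord_max.
  by rewrite tperm1 perm1 v_max /householder mul0mx scaler0 subr0 mul1mx subr0.
have dd0 : vdot (v d) (v d) != 0 by rewrite vdot_simplex_vertex // expf_neq0 ?gt_eqF.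
have [->|id] := eqVneq i d; first by rewrite tpermL v_max sub0r householder_self.
have [->|im] := eqVneq i ord_max; first by rewrite tpermR v_max mulmx0 subrr.
rewrite tpermD 1?eq_sym // householder_bisector //.
by rewrite vdot_simplex_vertex // vdot_simplex_edge // eq_sym.
Qed.

End regular_simplex.

Section configuration.
Context {R : realType} {D : nat} (v : 'I_D.+1 -> 'cV[R]_D).

Lemma tnth_config th M i : tnth (config v th M) i = tuple_shift (tup_of_cv (M *m v i)) th.
Proof.
by apply: eq_from_tnth => k; rewrite !tnth_mktuple [LHS]mxE [cv_of_tup _ _ _]mxE addrC.
Qed.

Lemma config_shift_mulmx th M {H d} {s : 'S_D.+1} :
  (forall i, H *m v i = v (s i) - v d) ->
  config v (tuple_shift (tup_of_cv (M *m v d)) th) (M *m H) = perm_tup s (config v th M).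
Proof.
move=> Hv; apply: eq_from_tnth => i; rewrite !tnth_mktuple -mulmxA Hv mulmxBr.
congr tup_of_cv; apply/matrixP => k l.
by rewrite !mxE !tnth_mktuple (ord1 l) !mxE; ring.
Qed.

End configuration.

Lemma integral_leb_int_config {R : realType} {D} (v : 'I_D.+1 -> 'cV[R]_D)
    {dO} {Omega : measurableType dO}
    (m : {sigma_finite_measure set Omega -> \bar R}) {Q : Omega -> 'M[R]_D}
    {phi : D.-tuple R * D.+1.-tuple (D.-tuple R) -> \bar R} :
  measurable_mx Q -> measurable_fun setT phi -> (forall p, 0 <= phi p)%E ->
  (\int[m]_w leb_int (fun th => phi (th, config v th (Q w)))
   = leb_int (fun th => \int[m]_w phi (th, config v th (Q w))))%E.
Proof.
move=> mQ mphi phi0.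
apply: (integral_leb_int m (fun z => phi (z.2, config v z.2 (Q z.1)))) => [|z];
  last exact: phi0.
apply: measurableT_comp mphi (measurable_fun_pair measurable_snd _).
apply: measurable_config measurable_snd _ => i j.
exact: measurableT_comp (mQ i j) measurable_fst.
Qed.

Section symmetric_test_function.
Context {R : realType} {D : nat} (v : 'I_D.+1 -> 'cV[R]_D)
  (f : D.-tuple R * D.+1.-tuple (D.-tuple R) -> \bar R).
Hypotheses (mf : measurable_fun setT f) (f0 : forall p, (0 <= f p)%E).
Hypothesis f_perm : forall th Th (s : 'S_D.+1), f (th, perm_tup s Th) = f (th, Th).

Definition leb_int_config M := leb_int (fun th => f (th, config v th M)).

Lemma measurable_leb_int_config : measurable_fun setT (leb_int_config \o mx_of_tup).
Proof.
apply: (measurable_leb_int (F := fun z => f (z.2, config v z.2 (mx_of_tup z.1)))) => [|z];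
  last exact: f0.
apply: measurableT_comp mf (measurable_fun_pair measurable_snd _).
exact: measurable_config _ measurable_snd (measurable_mx_of_tup measurable_fst).
Qed.

Lemma leb_int_config_ge0 M : (0 <= leb_int_config M)%E.
Proof. by apply: leb_int_ge0 => th; exact: f0. Qed.

Lemma leb_int_config_mulmx M H d (s : 'S_D.+1) :
  (forall i, H *m v i = v (s i) - v d) ->
  leb_int_config (M *m H) = leb_int (fun th => f (tnth (config v th M) d, config v th M)).
Proof.
move=> Hv; rewrite /leb_int_config -(leb_int_shift (tup_of_cv (M *m v d))).
- congr leb_int; apply/funext => th.
  by rewrite (config_shift_mulmx v _ _ Hv) f_perm tnth_config.
- apply: measurableT_comp mf _; apply: measurable_fun_pair => //.
  by apply: measurable_config => //; exact: measurable_mx_cst.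
- by move=> th; exact: f0.
Qed.

End symmetric_test_function.

Theorem lemma1 (R : realType) (D : nat) (hD : (1 <= D)%N) (lam : R) (hlam : 0 < lam)
  (v : 'I_D.+1 -> 'cV[R]_D) (hv0 : v ord_max = 0)
  (hdist : forall i j : 'I_D.+1, i != j -> enorm (v i - v j) = lam)
  (dO : measure_display) (Omega : measurableType dO) (P : probability Omega R)
  (Q : Omega -> 'M[R]_D)
  (hQmeas : forall i j, measurable_fun [set: Omega] (fun w => Q w i j))
  (hQorth : forall w, is_orth_mx (Q w))
  (hQhaar : forall U : 'M[R]_D, is_orth_mx U ->
     forall g : D.-tuple (D.-tuple R) -> \bar R,
       measurable_fun [set: D.-tuple (D.-tuple R)] g -> (forall x, (0 <= g x)%E) ->
       (\int[P]_w g (tup_of_mx (U *m Q w)) = \int[P]_w g (tup_of_mx (Q w)))%E)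
  (f : D.-tuple R * D.+1.-tuple (D.-tuple R) -> \bar R)
  (hfmeas : measurable_fun [set: D.-tuple R * D.+1.-tuple (D.-tuple R)] f)
  (hf0 : forall x, (0 <= f x)%E)
  (hfsym : forall theta Theta (s : 'S_D.+1), f (theta, perm_tup s Theta) = f (theta, Theta))
  (d : 'I_D.+1) :
  leb_int (fun theta : D.-tuple R => \int[P]_w f (theta, config v theta (Q w)))%E
  = leb_int (fun theta : D.-tuple R =>
       \int[P]_w f (tnth (config v theta (Q w)) d, config v theta (Q w)))%E.
Proof.
have mf_d : measurable_fun setT (fun p : D.-tuple R * D.+1.-tuple (D.-tuple R) =>
    f (tnth p.2 d, p.2)).
  apply: measurableT_comp hfmeas (measurable_fun_pair _ measurable_snd).
  exact: measurableT_comp (measurable_tnth d) measurable_snd.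
rewrite -(integral_leb_int_config v P hQmeas hfmeas hf0).
rewrite -(integral_leb_int_config v P hQmeas mf_d (fun=> hf0 _)).
have H_simplex := householder_simplex hlam hv0 hdist d.
transitivity (\int[P]_w leb_int_config v f (Q w *m householder (v d)))%E.
  symmetry; apply: (haar_mulmxr P Q hQmeas hQorth hQhaar _ _ (householder_orth _)).
    exact: measurable_leb_int_config.
  exact: leb_int_config_ge0.
by apply: eq_integral => w _; exact: leb_int_config_mulmx.
Qed.
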